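(* Let $\mathcal{G}$ be a 2-player finite game, let $y(t)$ solve $\dot y_k=v_k(Q(y))$, $k=1,2$, and let $x(t)=Q(y(t))$. If the score differences $y_{k\alpha}(t)-y_{k\beta}(t)$ remain bounded for all $t\ge0$, all $\alpha,\beta\in\mathcal{A}_k$ and $k=1,2$, then the time average $\bar x(t)=t^{-1}\int_0^tx(s)\,ds$ converges to the set of Nash equilibria of $\mathcal{G}$.
   Context: Setting: finite game with players $\mathcal{N}=\{1,2\}$, action sets $\mathcal{A}_k$, mixed strategies $\mathcal{X}_k=\Delta(\mathcal{A}_k)$, bilinear expected payoffs $u_k$, payoff vectors $v_k(x)=(u_k(\alpha;x_{-k}))_{\alpha\in\mathcal{A}_k}$. Each player has a penalty function $h_k$ on $\mathcal{X}_k$ (continuous, $C^\infty$ on relative interiors of faces, strongly convex: $h(tx_1+(1-t)x_2)\le th(x_1)+(1-t)h(x_2)-\tfrac12Kt(1-t)\|x_1-x_2\|^2$, $K>0$), with choice map $Q_k(y_k)=\arg\max_{x_k\in\mathcal{X}_k}\{\langle y_k,x_k\rangle-h_k(x_k)\}$; $Q=(Q_1,Q_2)$. Nash equilibrium: $u_k(x^* )\ge u_k(x_k;x^*_{-k})$ for all $x_k$, $k$. *)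

From HB Require Import structures.
From mathcomp Require Import all_boot all_order all_algebra.
From mathcomp Require Import all_classical all_reals all_analysis.
Set Implicit Arguments. Unset Strict Implicit. Unset Printing Implicit Defensive.
Import Order.TTheory GRing.Theory Num.Theory.
Import numFieldNormedType.Exports.
Local Open Scope classical_set_scope.
Local Open Scope ring_scope.

Section Game.
Variable R : realType.

Definition simplex (A : finType) (x : A -> R) : Prop :=
  (forall a, 0 <= x a) /\ \sum_a x a = 1.

Definition dotp (A : finType) (y x : A -> R) : R := \sum_a y a * x a.

Definition sqdist (A : finType) (x1 x2 : A -> R) : R := \sum_a (x1 a - x2 a) ^+ 2.

Definition continuous_on_simplex (A : finType) (h : (A -> R) -> R) : Prop :=
  forall x, simplex x -> forall e : R, 0 < e -> exists2 d : R, 0 < d &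
    forall z, simplex z -> (forall a, `|z a - x a| < d) -> `|h z - h x| < e.

Definition relint_face (A : finType) (S : {set A}) (x : A -> R) : Prop :=
  (forall a, a \in S -> 0 < x a) /\ (forall a, a \notin S -> x a = 0)
  /\ \sum_a x a = 1.

Definition tangent_face (A : finType) (S : {set A}) (d : A -> R) : Prop :=
  (forall a, a \notin S -> d a = 0) /\ \sum_a d a = 0.

Fixpoint iter_dd (A : finType) (f : (A -> R) -> R) (ds : seq (A -> R))
  : (A -> R) -> R :=
  match ds with
  | [::] => f
  | d :: ds' => fun x => derive1 (fun t : R => iter_dd f ds' (fun a => x a + t * d a)) 0
  end.

(* f is C^infty on the (relatively open) set U of the affine space with
   direction space T: all iterated directional derivatives along T exist
   and are continuous on U *)
Definition smooth_on (A : finType) (U T : (A -> R) -> Prop) (f : (A -> R) -> R)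
  : Prop :=
  forall ds : seq (A -> R), (forall d, d \in ds -> T d) ->
    (forall d x, T d -> U x ->
       derivable (fun t : R => iter_dd f ds (fun a => x a + t * d a)) 0 1)
    /\ (forall x, U x -> forall e : R, 0 < e -> exists2 del : R, 0 < del &
          forall z, U z -> (forall a, `|z a - x a| < del) ->
            `|iter_dd f ds z - iter_dd f ds x| < e).

Definition smooth_on_faces (A : finType) (h : (A -> R) -> R) : Prop :=
  forall S : {set A}, S != finset.set0 -> smooth_on (relint_face S) (tangent_face S) h.

Definition strongly_convex (A : finType) (h : (A -> R) -> R) : Prop :=
  exists2 K : R, 0 < K &
    forall x1 x2 (t : R), simplex x1 -> simplex x2 -> 0 <= t -> t <= 1 ->
      h (fun a => t * x1 a + (1 - t) * x2 a)
      <= t * h x1 + (1 - t) * h x2 - 2^-1 * K * t * (1 - t) * sqdist x1 x2.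

Definition penalty (A : finType) (h : (A -> R) -> R) : Prop :=
  [/\ continuous_on_simplex h, smooth_on_faces h & strongly_convex h].

Definition choice_map (A : finType) (h : (A -> R) -> R) (Q : (A -> R) -> A -> R)
  : Prop :=
  forall y, simplex (Q y) /\
    forall x, simplex x -> dotp y x - h x <= dotp y (Q y) - h (Q y).

Definition payoff (A1 A2 : finType) (U : A1 -> A2 -> R) (x1 : A1 -> R) (x2 : A2 -> R)
  : R := \sum_a1 \sum_a2 x1 a1 * x2 a2 * U a1 a2.

Definition payvec1 (A1 A2 : finType) (U1 : A1 -> A2 -> R) (x2 : A2 -> R) : A1 -> R :=
  fun a1 => \sum_a2 x2 a2 * U1 a1 a2.
Definition payvec2 (A1 A2 : finType) (U2 : A1 -> A2 -> R) (x1 : A1 -> R) : A2 -> R :=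
  fun a2 => \sum_a1 x1 a1 * U2 a1 a2.

Definition nash (A1 A2 : finType) (U1 U2 : A1 -> A2 -> R)
  (x1 : A1 -> R) (x2 : A2 -> R) : Prop :=
  [/\ simplex x1, simplex x2,
      (forall z1, simplex z1 -> payoff U1 z1 x2 <= payoff U1 x1 x2) &
      (forall z2, simplex z2 -> payoff U2 x1 z2 <= payoff U2 x1 x2)].

Definition time_avg (A : finType) (x : R -> A -> R) (t : R) : A -> R :=
  fun a => t^-1 * Rintegral lebesgue_measure `[0, t] (fun s => x s a).

End Game.

From HB Require Import structures.
From mathcomp Require Import all_boot all_order all_algebra.
From mathcomp Require Import all_classical all_reals all_analysis.
From mathcomp Require Import ring lra.
Set Implicit Arguments. Unset Strict Implicit. Unset Printing Implicit Defensive.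
Import Order.TTheory GRing.Theory Num.Theory.
Import numFieldNormedType.Exports.
Local Open Scope classical_set_scope.
Local Open Scope ring_scope.

(* Payoff vectors are linear, so v_1 at player 2's time-averaged strategy is
   the time average of v_1(x_2(s)) = y_1'(s), i.e. (y_1(t) - y_1(0)) / t.
   Bounded score differences therefore make player 1 asymptotically
   indifferent among his actions against the average of x_2, and
   symmetrically.  By compactness of the simplex, a strategy against which a
   player is nearly indifferent is close to one against which he is exactly
   indifferent, and a pair of strategies each making the opponent indifferent
   is a Nash equilibrium.  Strong convexity of the penalties makes the choice
   maps (Hoelder) continuous, which is what allows integrating along the orbit. *)

Section Games.
Variable R : realType.

Definition indifferent (A : finType) (v : A -> R) : Prop := forall a a', v a = v a'.

Lemma simplex_ge0_le1 (A : finType) (x : A -> R) a : simplex x -> 0 <= x a <= 1.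
Proof.
case=> x0 x1; rewrite x0 /= -x1 (bigD1 a) //= lerDl; exact: sumr_ge0.
Qed.

Lemma dotp_indifferent (A : finType) (v w z : A -> R) :
  indifferent v -> simplex w -> simplex z -> dotp v w = dotp v z.
Proof.
move=> iv sw sz; have [_ z1] := sz.
suff dotp_z u : simplex u -> dotp v u = \sum_j z j * v j.
  by rewrite (dotp_z w) // (dotp_z z).
case=> _ u1; transitivity (\sum_i u i * \sum_j z j * v j).
  apply: eq_bigr => i _; rewrite mulrC; congr (_ * _).
  rewrite -[LHS]mul1r -z1 mulr_suml.
  by apply: eq_bigr => j _; rewrite (iv i j).
by rewrite -mulr_suml u1 mul1r.
Qed.

Lemma payoff_dotp1 (A1 A2 : finType) (U : A1 -> A2 -> R) x1 x2 :
  payoff U x1 x2 = dotp (payvec1 U x2) x1.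
Proof.
rewrite /payoff /dotp /payvec1; apply: eq_bigr => a _; rewrite mulr_suml.
by apply: eq_bigr => b _; ring.
Qed.

Lemma payoff_dotp2 (A1 A2 : finType) (U : A1 -> A2 -> R) x1 x2 :
  payoff U x1 x2 = dotp (payvec2 U x1) x2.
Proof.
rewrite /payoff /dotp /payvec2 exchange_big /=; apply: eq_bigr => b _.
by rewrite mulr_suml; apply: eq_bigr => a _; ring.
Qed.

Lemma nash_indifferent (A1 A2 : finType) (U1 U2 : A1 -> A2 -> R) x1 x2 :
  simplex x1 -> simplex x2 ->
  indifferent (payvec1 U1 x2) -> indifferent (payvec2 U2 x1) ->
  nash U1 U2 x1 x2.
Proof.
move=> s1 s2 i1 i2; split=> // w sw.
  by rewrite !payoff_dotp1 (dotp_indifferent i1 sw s1).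
by rewrite !payoff_dotp2 (dotp_indifferent i2 sw s2).
Qed.

Lemma cvg_sum (T : Type) (F : set_system T) (I : Type) (r : seq I)
    (f : I -> T -> R) (l : I -> R) : Filter F ->
  (forall i, f i s @[s --> F] --> l i) ->
  \sum_(i <- r) f i s @[s --> F] --> \sum_(i <- r) l i.
Proof. by move=> FF fl; apply: (cvg_big add_continuous) => // i _; exact: fl. Qed.

Lemma sqdistC (A : finType) (x z : A -> R) : sqdist x z = sqdist z x.
Proof. by apply: eq_bigr => a _; rewrite -sqrrN opprB. Qed.

Lemma sqdist_ge_coord (A : finType) (x z : A -> R) a : (x a - z a) ^+ 2 <= sqdist x z.
Proof. by rewrite /sqdist (bigD1 a) //= lerDl; apply: sumr_ge0 => b _; exact: sqr_ge0. Qed.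

Lemma dotp_cross_diff_le (A : finType) (y y' x x' : A -> R) :
  simplex x -> simplex x' ->
  dotp y x - dotp y x' + (dotp y' x' - dotp y' x) <= \sum_a `|y a - y' a|.
Proof.
move=> sx sx'.
have -> : dotp y x - dotp y x' + (dotp y' x' - dotp y' x)
    = \sum_a (y a - y' a) * (x a - x' a).
  by rewrite /dotp -!sumrB -big_split /=; apply: eq_bigr => a _; ring.
apply: ler_sum => a _; apply: le_trans (ler_norm _) _.
rewrite normrM -[leRHS]mulr1; apply: ler_wpM2l => //.
move: (simplex_ge0_le1 a sx) (simplex_ge0_le1 a sx') => /andP[? ?] /andP[? ?].
by rewrite ler_norml; apply/andP; split; lra.
Qed.

Section ChoiceMap.
Variables (A : finType) (h : (A -> R) -> R) (Q : (A -> R) -> A -> R).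
Hypotheses (h_sconvex : strongly_convex h) (hQ : choice_map h Q).

(* Compare the maximizer Q y with the midpoint of Q y and z. *)
Lemma choice_map_quadratic_growth : exists2 K : R, 0 < K & forall y z, simplex z ->
  K / 4 * sqdist (Q y) z <= (dotp y (Q y) - h (Q y)) - (dotp y z - h z).
Proof.
case: h_sconvex => K K0 hK; exists K => // y z sz.
have [sQ maxQ] := hQ y.
pose m := fun a => 2^-1 * Q y a + (1 - 2^-1) * z a.
have sm : simplex m.
  case: sQ => q0 q1; case: sz => z0 z1; split.
    by move=> a; rewrite /m addr_ge0 // mulr_ge0 //; lra.
  by rewrite /m big_split /= -!mulr_sumr q1 z1; lra.
have dotp_m : dotp y m = 2^-1 * dotp y (Q y) + (1 - 2^-1) * dotp y z.
  by rewrite /dotp /m !mulr_sumr -big_split /=; apply: eq_bigr => a _; ring.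
have := maxQ m sm; have := hK (Q y) z 2^-1 sQ sz ltac:(lra) ltac:(lra).
rewrite -/m dotp_m.
set S := sqdist _ _; set KS := K * S.
have -> : 2^-1 * K * 2^-1 * (1 - 2^-1) * S = KS / 8 by rewrite /KS; field.
rewrite (_ : K / 4 * S = KS / 4); last by rewrite /KS; ring.
lra.
Qed.

Lemma choice_map_holder : exists2 C : R, 0 < C & forall y y' a,
  (Q y a - Q y' a) ^+ 2 <= C * \sum_b `|y b - y' b|.
Proof.
have [K K0 hK] := choice_map_quadratic_growth.
exists (4 / K) => [|y y' a]; first exact: divr_gt0.
have [s1 _] := hQ y; have [s2 _] := hQ y'.
have := hK y (Q y') s2; have := hK y' (Q y) s1; rewrite sqdistC.
have := dotp_cross_diff_le y y' s1 s2; have := sqdist_ge_coord (Q y) (Q y') a.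
have : 0 <= sqdist (Q y) (Q y') by apply: sumr_ge0 => b _; exact: sqr_ge0.
set S := sqdist _ _; set D := \sum_b _; set d := _ ^+ 2 => S0 dS gap g2 g1.
rewrite -(@ler_pM2l _ (K / 4)) ?divr_gt0 //.
rewrite (_ : K / 4 * (4 / K * D) = D); last by field; exact: lt0r_neq0.
have K4 : 0 < K / 4 by exact: divr_gt0.
nra.
Qed.

Lemma choice_map_cvg (T : Type) (F : set_system T) (u : T -> A -> R) (y : A -> R) :
  Filter F -> (forall b, u s b @[s --> F] --> y b) ->
  forall a, Q (u s) a @[s --> F] --> Q y a.
Proof.
move=> FF uy a; have [C C0 hC] := choice_map_holder.
have dist0 : \sum_b `|y b - u s b| @[s --> F] --> \sum_(b : A) (0 : R).
  apply: cvg_sum => b; rewrite -(normr0 R) -(subrr (y b)).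
  by apply: cvg_norm; apply: cvgB => //; exact: cvg_cst.
rewrite big1 // in dist0.
apply/cvgrPdist_lt => e e0.
move/cvgrPdist_lt: dist0 => /(_ (e ^+ 2 / C) (divr_gt0 (exprn_gt0 2 e0) C0)).
apply: filterS => s.
rewrite sub0r normrN ger0_norm ?sumr_ge0 // => small.
have := hC y (u s) a; move: small; set D := \sum_b _; set q := _ - _ => small hq.
have : q ^+ 2 < e ^+ 2 by apply: le_lt_trans hq _; rewrite -ltr_pdivlMl // mulrC.
by move=> q2; rewrite ltr_norml; apply/andP; split; nra.
Qed.

Lemma choice_map_continuous_within (D : set R) (y : R -> A -> R) :
  (forall b, {within D, continuous (fun s => y s b)}) ->
  forall a, {within D, continuous (fun s => Q (y s) a)}.
Proof. by move=> cy a s; apply: choice_map_cvg => b; exact: cy. Qed.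

End ChoiceMap.

Section Compactness.
Variable B : finType.
Local Notation PT := (prod_topology (fun _ : B => R)).

Lemma unit_box_compact : @compact PT [set f | forall b, `[0, 1]%classic (f b)].
Proof.
apply: (@tychonoff B (fun _ => R) (fun _ => `[0, 1]%classic)) => _.
exact: segment_compact.
Qed.

Lemma nbhs_sup_ball (p : PT) (r : R) :
  0 < r -> nbhs p [set z : PT | forall b, `|z b - p b| < r].
Proof.
move=> r0; have nbhs_p := @nbhs_filter PT p.
apply: (@filter_forall _ B (fun b => [set z : PT | `|z b - p b| < r]) _ nbhs_p) => b.
have /= := @proj_continuous B (fun _ => R) b p _ (nbhsx_ballx _ _ r0).
by apply: (filterS (F := nbhs p)) => z; rewrite -ball_normE /= distrC.
Qed.

Lemma weighted_sum_small (c : B -> R) (e : R) : 0 < e ->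
  exists2 r, 0 < r & forall d : B -> R, (forall b, `|d b| < r) ->
    \sum_b `|c b| * `|d b| < e.
Proof.
move=> e0; set C := \sum_b `|c b|.
have C0 : 0 <= C by apply: sumr_ge0.
exists (e / (C + 1)) => [|d small]; first by apply: divr_gt0 => //; lra.
apply: (@le_lt_trans _ _ (\sum_b `|c b| * (e / (C + 1)))).
  by apply: ler_sum => b _; apply: ler_wpM2l => //; exact: ltW.
by rewrite -mulr_suml -/C mulrA ltr_pdivrMr; nra.
Qed.

Lemma cluster_le0 (F : set_system PT) (p : PT) (phi : (B -> R) -> R) (c : B -> R) :
  cluster F p ->
  (forall z : B -> R, `|phi z - phi p| <= \sum_b `|c b| * `|z b - p b|) ->
  (forall d, 0 < d -> F [set z | phi z <= d]) -> phi p <= 0.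
Proof.
move=> clp phi_lip small; rewrite leNgt; apply/negP => phip.
have e0 : 0 < phi p / 2 by exact: divr_gt0.
have [r r0 hr] := weighted_sum_small c e0.
have [z [/= zle zp]] := clp _ _ (small _ e0) (nbhs_sup_ball p r0).
have := hr (fun b => z b - p b) zp; have := phi_lip z.
by move: zle; rewrite ler_norml => ? /andP[? ?] ?; lra.
Qed.

Lemma simplex_cluster (F : set_system PT) : ProperFilter F ->
  F [set z | simplex z] -> exists2 p, simplex p & cluster F p.
Proof.
move=> FF Fs; have Fbox : F [set f | forall b, `[0, 1]%classic (f b)].
  by apply: filterS Fs => z sz b; rewrite /= in_itv /= simplex_ge0_le1.
have [p [boxp clp]] := unit_box_compact FF Fbox.
exists p => //; split=> [b|].
  by have := boxp b; rewrite /= in_itv /= => /andP[].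
suff : `|\sum_b p b - 1| <= 0 by rewrite normr_le0 subr_eq0 => /eqP.
apply: (cluster_le0 (phi := fun z => `|\sum_b z b - 1|) (c := fun=> 1) clp) => [z|d d0].
  apply: le_trans (ler_dist_dist _ _) _.
  rewrite opprB addrA subrK -sumrB; apply: le_trans (ler_norm_sum _ _ _) _.
  by apply: ler_sum => b _; rewrite normr1 mul1r.
by apply: filterS Fs => z [_ /= ->]; rewrite subrr normr0 ltW.
Qed.

Section NearIndifference.
Variables (A : finType) (U : A -> B -> R).

Lemma payvec1_lipschitz (z p : B -> R) a :
  `|payvec1 U z a - payvec1 U p a| <= \sum_b `|U a b| * `|z b - p b|.
Proof.
rewrite /payvec1 -sumrB; apply: le_trans (ler_norm_sum _ _ _) _.
by apply: ler_sum => b _; rewrite -mulrBl normrM mulrC.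
Qed.

Lemma cluster_indifferent (F : set_system PT) (p : PT) : cluster F p ->
  (forall a a' d, 0 < d -> F [set z | `|payvec1 U z a - payvec1 U z a'| <= d]) ->
  indifferent (payvec1 U p).
Proof.
move=> clp small a a'; apply/eqP; rewrite -subr_eq0 -normr_eq0 eq_le normr_ge0 andbT.
apply: (cluster_le0 (phi := fun z => `|payvec1 U z a - payvec1 U z a'|)
  (c := fun b => `|U a b| + `|U a' b|) clp) => [z|d d0].
  apply: le_trans (ler_dist_dist _ _) _.
  have -> : payvec1 U z a - payvec1 U z a' - (payvec1 U p a - payvec1 U p a') =
      (payvec1 U z a - payvec1 U p a) - (payvec1 U z a' - payvec1 U p a') by ring.
  apply: le_trans (ler_normB _ _) _.
  apply: le_trans (lerD (payvec1_lipschitz z p a) (payvec1_lipschitz z p a')) _.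
  rewrite -big_split /=; apply: ler_sum => b _.
  by rewrite [X in _ <= X * _]ger0_norm ?addr_ge0 // mulrDl.
exact: small.
Qed.

(* Argue by contradiction: a sequence of ever more nearly indifferent mixed
   strategies staying e-far from indifference has a cluster point, which is
   indifferent by continuity. *)
Lemma near_indifferent (e : R) : 0 < e ->
  exists2 d, 0 < d & forall z, simplex z ->
    (forall a a', `|payvec1 U z a - payvec1 U z a'| < d) ->
    exists2 z', simplex z' /\ indifferent (payvec1 U z') & forall b, `|z b - z' b| < e.
Proof.
move=> e0; apply: contrapT => no_d.
have bad n : exists z : B -> R, [/\ simplex z,
    forall a a', `|payvec1 U z a - payvec1 U z a'| < n.+1%:R^-1 &
    ~ exists2 z', simplex z' /\ indifferent (payvec1 U z') &
      forall b, `|z b - z' b| < e].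
  apply: contrapT => no_z; apply: no_d; exists n.+1%:R^-1 => // z sz gap.
  by apply: contrapT => far; apply: no_z; exists z.
have [zs hzs] := choice bad.
pose F := (fun n => zs n : PT) @ \oo.
have FF : ProperFilter F by exact: fmap_proper_filter.
have [p sp clp] : exists2 p, simplex p & cluster F p.
  by apply: simplex_cluster; exists 0%N => // n _; have [] := hzs n.
have ip : indifferent (payvec1 U p).
  apply: (cluster_indifferent clp) => a a' d d0.
  have [N _ hN] := near_infty_natSinv_lt (PosNum d0).
  exists N => // n /= Nn; have [_ gap _] := hzs n.
  by apply/ltW/(lt_le_trans (gap a a')); apply/ltW/hN.
have Frange : F (range zs : set PT) by exists 0%N => // n _; exists n.
have [_ [[n _ <-] zp]] := clp _ _ Frange (nbhs_sup_ball p e0).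
by have [_ _ []] := hzs n; exists p.
Qed.

End NearIndifference.

End Compactness.

Local Notation mu := (@lebesgue_measure R).

Lemma Rintegral_sum (D : set R) (I : Type) (r : seq I) (f : I -> R -> R) :
  measurable D -> (forall i, mu.-integrable D (EFin \o f i)) ->
  \int[mu]_(x in D) (\sum_(i <- r) f i x) = \sum_(i <- r) \int[mu]_(x in D) f i x.
Proof.
move=> mD intf; rewrite /Rintegral.
under eq_integral do rewrite -sumEFin.
rewrite integral_sum // -EFin_sum_fine //= => i _; exact: integrable_fin_num (intf i).
Qed.

Lemma continuous_itvcy_integrable (g : R -> R) (t : R) :
  {within `[0, +oo[, continuous g} -> mu.-integrable `[0, t] (EFin \o g).
Proof.
move=> cg; apply: continuous_compact_integrable; first exact: segment_compact.
by apply: continuous_subspaceW cg; apply: subset_itv; rewrite ?bnd_simp.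
Qed.

Lemma simplex_time_avg (B : finType) (x : R -> B -> R) (t : R) :
  (forall s, simplex (x s)) -> (forall b, {within `[0, +oo[, continuous (fun s => x s b)}) ->
  0 < t -> simplex (time_avg x t).
Proof.
move=> xs cx t0; have mI : measurable `[0, t] by exact: measurable_itv.
split=> [b|].
  rewrite /time_avg mulr_ge0 ?invr_ge0 ?(ltW t0) //.
  by apply: Rintegral_ge0 => s _; exact: (xs s).1.
rewrite /time_avg -mulr_sumr -Rintegral_sum // => [|b]; last first.
  exact: continuous_itvcy_integrable.
under eq_Rintegral do rewrite (xs _).2.
rewrite Rintegral_cst //; change (t^-1 * (1 * fine (mu `[0, t]%classic)) = 1).
by rewrite lebesgue_measure_itv /= lte_fin t0 /= subr0 mul1r mulVf // gt_eqF.
Qed.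

Section TimeAverage.
Variables (A B : finType) (U : A -> B -> R) (y : R -> A -> R) (x : R -> B -> R).
Hypothesis y_ode : forall t : R, 0 < t -> forall a,
  is_derive t 1 (fun s => y s a) (payvec1 U (x t) a).
Hypothesis y_cont0 : forall a, (fun s => y s a) s @[s --> 0^'+] --> y 0 a.
Hypothesis x_cont : forall b, {within `[0, +oo[, continuous (fun s => x s b)}.

Lemma score_derivable_oy_Rcontinuous a : derivable_oy_Rcontinuous (fun s => y s a) 0.
Proof.
split=> [s|]; last exact: y_cont0.
by rewrite in_itv /= andbT => s0; have := y_ode s0 a => ?; exact: ex_derive.
Qed.

Lemma payvec1_time_avg t a : 0 < t ->
  payvec1 U (time_avg x t) a = t^-1 * (y t a - y 0 a).
Proof.
move=> t0; have mI : measurable `[0, t] by exact: measurable_itv.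
have int_x b : mu.-integrable `[0, t] (EFin \o (fun s => x s b * U a b)).
  apply: continuous_itvcy_integrable => s.
  by apply: cvgMr_tmp; exact: x_cont.
have cf : {within `[0, +oo[, continuous (fun s => payvec1 U (x s) a)}.
  by move=> s; apply: cvg_sum => b; apply: cvgMr_tmp; exact: x_cont.
have {}cf : {within `[0, t], continuous (fun s => payvec1 U (x s) a)}.
  by apply: continuous_subspaceW cf; apply: subset_itv; rewrite ?bnd_simp.
have y'_eq : {in `]0, t[, derive1 (fun s => y s a) =1 (fun s => payvec1 U (x s) a)}.
  move=> s; rewrite in_itv /= => /andP[s0 _]; rewrite derive1E.
  by have := y_ode s0 a => ?; exact: derive_val.
have := continuous_FTC2 t0 cf
  (derivable_oy_continuousWoo t0 (lexx 0) (score_derivable_oy_Rcontinuous a)) y'_eq.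
rewrite -EFinB => /(congr1 fine) /= <-.
rewrite -[X in _ * X]/(\int[mu]_(s in `[0, t]) payvec1 U (x s) a).
rewrite /time_avg /payvec1 Rintegral_sum // mulr_sumr.
by apply: eq_bigr => b _; rewrite RintegralZr ?mulrA //; exact: continuous_itvcy_integrable.
Qed.

Lemma payvec1_time_avg_gap (M : R) :
  (forall t, 0 <= t -> forall a a', `|y t a - y t a'| <= M) ->
  forall d, 0 < d -> exists T, forall t, T < t -> forall a a',
    `|payvec1 U (time_avg x t) a - payvec1 U (time_avg x t) a'| < d.
Proof.
move=> bnd d d0; exists ((2 * M + 1) / d) => t Tt a a'.
have M0 : 0 <= M by apply: le_trans (bnd 0 (lexx 0) a a); exact: normr_ge0.
have T0 : 0 < (2 * M + 1) / d by apply: divr_gt0 => //; lra.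
have t0 : 0 < t by apply: lt_trans Tt.
rewrite !payvec1_time_avg // -mulrBr normrM gtr0_norm ?invr_gt0 // mulrC.
rewrite ltr_pdivrMr //; move: Tt; rewrite ltr_pdivrMr // mulrC => Tt.
have -> : y t a - y 0 a - (y t a' - y 0 a') = (y t a - y t a') - (y 0 a - y 0 a').
  by ring.
apply: le_lt_trans (ler_normB _ _) _.
by have := bnd t (ltW t0) a a'; have := bnd 0 (lexx 0) a a'; lra.
Qed.

Lemma time_avg_near_indifferent : (forall s, simplex (x s)) ->
  (exists M, forall t, 0 <= t -> forall a a', `|y t a - y t a'| <= M) ->
  forall e, 0 < e -> exists T, forall t, T < t ->
    exists2 z, simplex z /\ indifferent (payvec1 U z) &
      forall b, `|time_avg x t b - z b| < e.
Proof.
move=> xs [M bnd] e e0.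
have [d d0 near_d] := near_indifferent U e0.
have [T gapT] := payvec1_time_avg_gap bnd d0.
exists (Num.max T 0) => t; rewrite gt_max => /andP[Tt t0].
by apply: near_d; [exact: simplex_time_avg | exact: gapT].
Qed.

End TimeAverage.

End Games.

Theorem theorem6p1 (R : realType) (A1 A2 : finType) (U1 U2 : A1 -> A2 -> R)
  (h1 : (A1 -> R) -> R) (h2 : (A2 -> R) -> R)
  (Q1 : (A1 -> R) -> A1 -> R) (Q2 : (A2 -> R) -> A2 -> R)
  (y1 : R -> A1 -> R) (y2 : R -> A2 -> R) :
  penalty h1 -> penalty h2 ->
  choice_map h1 Q1 -> choice_map h2 Q2 ->
  (forall t : R, 0 < t -> forall a,
     is_derive t 1 (fun s => y1 s a) (payvec1 U1 (Q2 (y2 t)) a)) ->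
  (forall t : R, 0 < t -> forall b,
     is_derive t 1 (fun s => y2 s b) (payvec2 U2 (Q1 (y1 t)) b)) ->
  (forall a, (fun s : R => y1 s a) x @[x --> 0^'+] --> y1 0 a) ->
  (forall b, (fun s : R => y2 s b) x @[x --> 0^'+] --> y2 0 b) ->
  (exists M : R, forall t : R, 0 <= t -> forall a a', `|y1 t a - y1 t a'| <= M) ->
  (exists M : R, forall t : R, 0 <= t -> forall b b', `|y2 t b - y2 t b'| <= M) ->
  forall e : R, 0 < e -> exists T : R, forall t : R, T < t ->
    exists z1 z2, nash U1 U2 z1 z2 /\
      (forall a, `|time_avg (fun s => Q1 (y1 s)) t a - z1 a| < e) /\
      (forall b, `|time_avg (fun s => Q2 (y2 s)) t b - z2 b| < e).
Proof.
case=> _ _ sc1 [_ _ sc2] hQ1 hQ2 y1_ode y2_ode y1_0 y2_0 bnd1 bnd2 e e0.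
have cx1 := choice_map_continuous_within sc1 hQ1 (fun a =>
  derivable_oy_Rcontinuous_within_itvcy (score_derivable_oy_Rcontinuous y1_ode y1_0 a)).
have cx2 := choice_map_continuous_within sc2 hQ2 (fun b =>
  derivable_oy_Rcontinuous_within_itvcy (score_derivable_oy_Rcontinuous y2_ode y2_0 b)).
(* payvec2 U2 is, by conversion, payvec1 of the transposed payoff matrix. *)
have [T1 near1] := time_avg_near_indifferent (U := fun b a => U2 a b) y2_ode y2_0 cx1
  (fun s => (hQ1 _).1) bnd2 e0.
have [T2 near2] := time_avg_near_indifferent y1_ode y1_0 cx2 (fun s => (hQ2 _).1) bnd1 e0.
exists (Num.max T1 T2) => t; rewrite gt_max.
move=> /andP[/near1[z1 [s1 i1] c1] /near2[z2 [s2 i2] c2]].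
by exists z1, z2; split; first exact: nash_indifferent.
Qed.
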